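(* Let $N, M_d\ge 1$ be integers, let $P_s,P_r,\sigma_r^2,\sigma_d^2>0$ and $\varepsilon\ge 0$ be real numbers, let $\tilde{\mathbf H}_{rd}\in\mathbb C^{M_d\times N}$ and let $\mathbf g\in\mathbb C^{N}$ with $\mathbf g\neq\mathbf 0$. Consider the optimization problem $$\max_{\mathbf W\in\mathbb C^{N\times N},\,\mathbf r\in\mathbb C^{M_d}}\ \min_{\Delta\mathbf H\in\mathbb C^{M_d\times N},\ \|\Delta \mathbf H\|_F\leq \varepsilon}\ \frac{P_s|\mathbf r^H(\tilde {\mathbf H}_{rd}+\Delta \mathbf H)\mathbf W\mathbf g|^2}{\sigma_r^2\|\mathbf r^H(\tilde {\mathbf H}_{rd}+\Delta \mathbf H)\mathbf W\|_2^2+\sigma_d^2}$$ subject to $[P_s\mathbf W\mathbf g\mathbf g^H\mathbf W^H+\sigma_r^2\mathbf W\mathbf W^H]_{i,i}\leq P_r$ for all $i=1,\dots,N$, and $\|\mathbf r\|_2=1$. Then the optimal $\mathbf W$ of this problem is given by $$\mathbf W=\frac{\tilde P_r}{\|\mathbf g\|_2}\,\mathbf w\, \mathbf g^H$$ for some $\mathbf w=[w_1,\dots,w_N]^T\in\mathbb C^N$, where $\tilde P_r= \sqrt{\frac{P_r}{P_s\|\mathbf g\|_2^2+\sigma_r^2}}$.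
   Context: $[\mathbf A]_{i,i}$ denotes the $i$-th diagonal entry of a matrix $\mathbf A$; $(\cdot)^H$ is the conjugate transpose; $\|\cdot\|_2$ is the Euclidean norm and $\|\cdot\|_F$ the Frobenius norm. This problem models a two-hop amplify-and-forward relay with $N$ relay antennas, relay beamforming matrix $\mathbf W$, receive beamformer $\mathbf r$, effective first-hop channel $\mathbf g$, estimated second-hop channel $\tilde{\mathbf H}_{rd}$ with norm-bounded error $\Delta\mathbf H$, and per-antenna relay power limit $P_r$. *)

From HB Require Import structures.
From mathcomp Require Import all_boot all_order all_algebra.
From mathcomp Require Import all_classical all_reals.
From mathcomp.real_closed Require Import complex.
Set Implicit Arguments. Unset Strict Implicit. Unset Printing Implicit Defensive.
Import Order.TTheory GRing.Theory Num.Theory.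
Local Open Scope ring_scope.
Local Open Scope complex_scope.

Section Relay.
Variable R : realType.
Local Notation C := R[i].

Definition hermT m n (A : 'M[C]_(m, n)) : 'M[C]_(n, m) :=
  \matrix_(i < n, j < m) (A j i)^*.

Definition cabs2 (z : C) : R := ComplexField.Normc.normc z ^+ 2.

(* Frobenius norm (= Euclidean 2-norm for row/column vectors) *)
Definition frob m n (A : 'M[C]_(m, n)) : R :=
  Num.sqrt (\sum_(i < m) \sum_(j < n) cabs2 (A i j)).

Definition sinr (Md N : nat) (Ps sr2 sd2 : R) (Ht : 'M[C]_(Md, N))
  (g : 'cV[C]_N) (W : 'M[C]_N) (r : 'cV[C]_Md) (dH : 'M[C]_(Md, N)) : R :=
  let a := hermT r *m (Ht + dH) *m W in
  Ps * cabs2 ((a *m g) 0 0) / (sr2 * frob a ^+ 2 + sd2).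

(* worst-case SINR: min over ||dH||_F <= eps (attained; written as inf) *)
Definition robust_sinr (Md N : nat) (Ps sr2 sd2 eps : R) (Ht : 'M[C]_(Md, N))
  (g : 'cV[C]_N) (W : 'M[C]_N) (r : 'cV[C]_Md) : R :=
  inf [set sinr Ps sr2 sd2 Ht g W r dH | dH in [set dH : 'M[C]_(Md, N) | frob dH <= eps]]%classic.

Definition feasible (Md N : nat) (Ps Pr sr2 : R) (g : 'cV[C]_N)
  (W : 'M[C]_N) (r : 'cV[C]_Md) : Prop :=
  (forall i : 'I_N,
     (Ps%:C *: (W *m g *m hermT g *m hermT W) + sr2%:C *: (W *m hermT W)) i i
       <= Pr%:C) /\ frob r = 1.

Definition optimal (Md N : nat) (Ps Pr sr2 sd2 eps : R) (Ht : 'M[C]_(Md, N))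
  (g : 'cV[C]_N) (W : 'M[C]_N) (r : 'cV[C]_Md) : Prop :=
  feasible Ps Pr sr2 g W r /\
  forall (W' : 'M[C]_N) (r' : 'cV[C]_Md), feasible Ps Pr sr2 g W' r' ->
    robust_sinr Ps sr2 sd2 eps Ht g W' r' <= robust_sinr Ps sr2 sd2 eps Ht g W r.

End Relay.

From HB Require Import structures.
From mathcomp Require Import all_boot all_order all_algebra.
From mathcomp Require Import all_classical all_reals all_analysis.
From mathcomp.real_closed Require Import complex.
From mathcomp Require Import ring lra.
Set Implicit Arguments. Unset Strict Implicit. Unset Printing Implicit Defensive.
Import Order.TTheory GRing.Theory Num.Theory.
Import numFieldNormedType.Exports.
Local Open Scope classical_set_scope.
Local Open Scope ring_scope.
Local Open Scope complex_scope.

(** Write [W g = |g|^2 u].  By Cauchy-Schwarz,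
    [|r^H (Ht + dH) W|^2 >= |r^H (Ht + dH) W g|^2 / |g|^2], with equality
    when [W = u g^H]; hence the SINR of any [W] is at most that of [u g^H],
    an increasing function of [|r^H (Ht + dH) u|].  The power constraint on
    [W] puts [u] in the box [|u_i| <= P~r / |g|], which is also the set of
    [u] for which [u g^H] is feasible.  For a unit receiver [r], an error of
    Frobenius norm at most [eps] lowers [|r^H Ht u|] by at most [eps |u|],
    and a multiple of [r u^H] achieves this (or cancels the gain).  With [r]
    aligned to [Ht u], the robust SINR of [u g^H] is thus an increasing
    function of [|Ht u| - eps |u|], which attains its maximum on the compact
    box. *)

Local Notation normc := ComplexField.Normc.normc.

Section ComplexModulus.
Variable R : realType.
Implicit Types (x y z : R[i]) (a : R).

Lemma cabs2E z : cabs2 z = complex.Re z ^+ 2 + complex.Im z ^+ 2.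
Proof. by case: z => a b; rewrite /cabs2 /= sqr_sqrtr // addr_ge0 ?sqr_ge0. Qed.

Lemma cabs2_ge0 z : 0 <= cabs2 z.
Proof. by rewrite cabs2E addr_ge0 ?sqr_ge0. Qed.

Lemma cabs2_mulJ z : (cabs2 z)%:C = z * conjc z.
Proof.
case: z => a b; rewrite cabs2E /=.
by apply/eqP; rewrite eq_complex /=; apply/andP; split; apply/eqP; ring.
Qed.

Lemma cabs2M x y : cabs2 (x * y) = cabs2 x * cabs2 y.
Proof. by rewrite /cabs2 ComplexField.Normc.normcM exprMn. Qed.

Lemma cabs2J z : cabs2 (conjc z) = cabs2 z.
Proof. by case: z => a b; rewrite !cabs2E /= sqrrN. Qed.

Lemma cabs2R a : cabs2 a%:C = a ^+ 2.
Proof. by rewrite cabs2E /= expr0n /= addr0. Qed.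

Lemma cabs20 : cabs2 (0 : R[i]) = 0.
Proof. by rewrite -(rmorph0 (real_complex R)) cabs2R expr0n. Qed.

Lemma cabs2_eq0 z : (cabs2 z == 0) = (z == 0).
Proof. by rewrite -(inj_eq (@complexI R)) cabs2_mulJ mulf_eq0 conjc_eq0 orbb. Qed.

Lemma normc_ge0 z : 0 <= normc z.
Proof. by case: z => a b; exact: sqrtr_ge0. Qed.

Lemma normcR a : normc a%:C = `|a|.
Proof. by rewrite -sqrtr_sqr -cabs2R sqrtr_sqr ger0_norm ?normc_ge0. Qed.

Lemma normc_le z a : 0 <= a -> (normc z <= a) = (cabs2 z <= a ^+ 2).
Proof. by move=> a0; rewrite ler_pXn2r // nnegrE ?normc_ge0. Qed.

Lemma lagrange_identity (I : finType) (x y : I -> R[i]) :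
  (\sum_k \sum_l cabs2 (x k * conjc (y l) - x l * conjc (y k)))%:C =
  2%:R * (((\sum_k cabs2 (x k)) * (\sum_k cabs2 (y k)))%:C
          - (cabs2 (\sum_k x k * y k))%:C).
Proof.
pose a k := x k * conjc (x k); pose b k := y k * conjc (y k); pose p k := x k * y k.
transitivity (\sum_k \sum_l
    (a k * b l + a l * b k - p k * conjc (p l) - p l * conjc (p k))).
  rewrite rmorph_sum /=; apply: eq_bigr => k _; rewrite rmorph_sum /=.
  apply: eq_bigr => l _.
  by rewrite cabs2_mulJ /a /b /p !rmorphB !rmorphM /= !conjcK; ring.
rewrite rmorphM !rmorph_sum cabs2_mulJ rmorph_sum /=.
under eq_bigr => k _ do rewrite !sumrB big_split /=.
rewrite !sumrB big_split /= [X in _ + X - _ - _]exchange_big.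
rewrite [X in _ - X]exchange_big -!big_distrlr /=.
under [X in _ = _ * (X * _ - _)]eq_bigr => k _ do rewrite cabs2_mulJ.
under [X in _ = _ * (_ * X - _)]eq_bigr => k _ do rewrite cabs2_mulJ.
rewrite /a /b /p; ring.
Qed.

Lemma cauchy_schwarz (I : finType) (x y : I -> R[i]) :
  cabs2 (\sum_k x k * y k) <= (\sum_k cabs2 (x k)) * (\sum_k cabs2 (y k)).
Proof.
have : 0 <= \sum_k \sum_l cabs2 (x k * conjc (y l) - x l * conjc (y k)).
  by do 2![apply: sumr_ge0 => ? _]; exact: cabs2_ge0.
rewrite -ler0c lagrange_identity -rmorphB -(rmorph_nat (real_complex R)) -rmorphM.
by rewrite ler0c pmulr_rge0 ?ltr0n // subr_ge0.
Qed.

End ComplexModulus.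

Section Frobenius.
Variable R : realType.
Local Notation C := R[i].

Lemma hermTM m n p (A : 'M[C]_(m, n)) (B : 'M[C]_(n, p)) :
  hermT (A *m B) = hermT B *m hermT A.
Proof.
apply/matrixP => i j; rewrite !mxE rmorph_sum; apply: eq_bigr => k _.
by rewrite !mxE rmorphM mulrC.
Qed.

Lemma hermTZ m n (c : C) (A : 'M[C]_(m, n)) : hermT (c *: A) = conjc c *: hermT A.
Proof. by apply/matrixP => i j; rewrite !mxE rmorphM. Qed.

Lemma sqr_frob m n (A : 'M[C]_(m, n)) :
  frob A ^+ 2 = \sum_i \sum_j cabs2 (A i j).
Proof. by rewrite sqr_sqrtr //; do 2![apply: sumr_ge0 => ? _]; exact: cabs2_ge0. Qed.

Lemma frob_ge0 m n (A : 'M[C]_(m, n)) : 0 <= frob A.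
Proof. exact: sqrtr_ge0. Qed.

Lemma sqr_frob_col n (x : 'cV[C]_n) : frob x ^+ 2 = \sum_i cabs2 (x i 0).
Proof. by rewrite sqr_frob; apply: eq_bigr => i _; rewrite big_ord1. Qed.

Lemma sqr_frob_row n (a : 'rV[C]_n) : frob a ^+ 2 = \sum_j cabs2 (a 0 j).
Proof. by rewrite sqr_frob big_ord1. Qed.

Lemma frob_le m n (A : 'M[C]_(m, n)) (b : R) :
  0 <= b -> (frob A <= b) = (frob A ^+ 2 <= b ^+ 2).
Proof. by move=> b0; rewrite ler_pXn2r // nnegrE frob_ge0. Qed.

Lemma frob0 m n : frob (0 : 'M[C]_(m, n)) = 0.
Proof.
rewrite /frob big1 ?sqrtr0 // => i _; rewrite big1 // => j _.
by rewrite mxE cabs20.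
Qed.

Lemma frob_eq0 m n (A : 'M[C]_(m, n)) : (frob A == 0) = (A == 0).
Proof.
apply/eqP/eqP => [A0|->]; last exact: frob0.
have entry_ge0 i j : 0 <= cabs2 (A i j) by exact: cabs2_ge0.
have row_ge0 i : 0 <= \sum_j cabs2 (A i j) by exact: sumr_ge0.
have sum0 : \sum_i \sum_j cabs2 (A i j) = 0 by rewrite -sqr_frob A0 expr0n.
apply/matrixP => i j; rewrite mxE; apply/eqP; rewrite -cabs2_eq0; apply/eqP.
have row0 := psumr_eq0P (fun k _ => row_ge0 k) sum0 (i := i) isT.
exact: (psumr_eq0P (fun k _ => entry_ge0 i k) row0 (i := j) isT).
Qed.

Lemma frobZ m n (c : C) (A : 'M[C]_(m, n)) : frob (c *: A) = normc c * frob A.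
Proof.
rewrite /frob -[normc c]ger0_norm ?normc_ge0 // -sqrtr_sqr -sqrtrM ?sqr_ge0 //.
rewrite -[normc c ^+ 2]/(cabs2 c) mulr_sumr; congr Num.sqrt; apply: eq_bigr => i _.
by rewrite mulr_sumr; apply: eq_bigr => j _; rewrite mxE cabs2M.
Qed.

Lemma frob_hermT m n (A : 'M[C]_(m, n)) : frob (hermT A) = frob A.
Proof.
rewrite /frob exchange_big; congr Num.sqrt; apply: eq_bigr => i _.
by apply: eq_bigr => j _; rewrite mxE cabs2J.
Qed.

Lemma frob_outer m n (r : 'cV[C]_m) (u : 'cV[C]_n) :
  frob (r *m hermT u) = frob r * frob u.
Proof.
apply/eqP; rewrite -(eqrXn2 (n := 2)) ?mulr_ge0 ?frob_ge0 //.
rewrite exprMn !sqr_frob_col sqr_frob big_distrl; apply/eqP/eq_bigr => i _.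
rewrite big_distrr; apply: eq_bigr => j _.
by rewrite !mxE big_ord1 mxE cabs2M cabs2J.
Qed.

Lemma cabs2_mulmx_le m n (A : 'M[C]_(m, n)) (x : 'cV[C]_n) i :
  cabs2 ((A *m x) i 0) <= (\sum_j cabs2 (A i j)) * frob x ^+ 2.
Proof. by rewrite mxE sqr_frob_col; exact: cauchy_schwarz. Qed.

Lemma frob_mulmx_le m n (A : 'M[C]_(m, n)) (x : 'cV[C]_n) :
  frob (A *m x) <= frob A * frob x.
Proof.
rewrite frob_le ?mulr_ge0 ?frob_ge0 // exprMn sqr_frob_col sqr_frob mulr_suml.
by apply: ler_sum => i _; exact: cabs2_mulmx_le.
Qed.

Definition dotc n (r v : 'cV[C]_n) : C := (hermT r *m v) 0 0.

Lemma dotcD n (r v w : 'cV[C]_n) : dotc r (v + w) = dotc r v + dotc r w.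
Proof. by rewrite /dotc mulmxDr mxE. Qed.

Lemma dotcZ n (r v : 'cV[C]_n) c : dotc r (c *: v) = c * dotc r v.
Proof. by rewrite /dotc -scalemxAr mxE. Qed.

Lemma dotcc n (r : 'cV[C]_n) : dotc r r = (frob r ^+ 2)%:C.
Proof.
rewrite /dotc mxE sqr_frob_col rmorph_sum /=; apply: eq_bigr => i _.
by rewrite mxE cabs2_mulJ mulrC.
Qed.

Lemma hermT_mul_self n (x : 'cV[C]_n) : hermT x *m x = (frob x ^+ 2)%:C%:M.
Proof. by rewrite [LHS]mx11_scalar -dotcc. Qed.

Lemma mulmx_outer m n (r : 'cV[C]_m) (u : 'cV[C]_n) :
  r *m hermT u *m u = (frob u ^+ 2)%:C *: r.
Proof. by rewrite -mulmxA hermT_mul_self mul_mx_scalar. Qed.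

Lemma normc_dotc_le n (r v : 'cV[C]_n) : normc (dotc r v) <= frob r * frob v.
Proof.
rewrite normc_le ?mulr_ge0 ?frob_ge0 // exprMn.
have -> : frob r ^+ 2 = \sum_j cabs2 (hermT r 0 j).
  by rewrite sqr_frob_col; apply: eq_bigr => j _; rewrite mxE cabs2J.
exact: cabs2_mulmx_le.
Qed.

Lemma frob_normalize n (w : 'cV[C]_n) : w != 0 -> frob ((frob w)^-1%:C *: w) = 1.
Proof.
rewrite -frob_eq0 => w_neq0.
by rewrite frobZ normcR ger0_norm ?invr_ge0 ?frob_ge0 // mulVf.
Qed.

Lemma exists_dotc_eq n (v : 'cV[C]_n) :
  (0 < n)%N -> exists r, frob r = 1 /\ normc (dotc r v) = frob v.
Proof.
move=> n_gt0; have [->|v_neq0] := eqVneq v 0.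
  have e_neq0 : const_mx 1 != 0 :> 'cV[C]_n.
    apply/negP => /eqP/matrixP/(_ (Ordinal n_gt0) 0).
    by rewrite !mxE => /eqP; rewrite oner_eq0.
  exists ((frob (const_mx 1 : 'cV[C]_n))^-1%:C *: const_mx 1).
  by rewrite frob_normalize // /dotc mulmx0 mxE frob0 ComplexField.Normc.normc0.
exists ((frob v)^-1%:C *: v); split; first exact: frob_normalize.
have v_gt0 : 0 < frob v by rewrite lt_def frob_eq0 v_neq0 frob_ge0.
rewrite /dotc hermTZ -scalemxAl mxE -/(dotc v v) dotcc conjc_real -rmorphM.
rewrite normcR ger0_norm ?mulr_ge0 ?invr_ge0 ?sqr_ge0 ?frob_ge0 //.
by rewrite expr2 mulKf ?gt_eqF.
Qed.

End Frobenius.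

Section Perturbation.
Variable R : realType.
Local Notation C := R[i].

Lemma normc_dotc_perturb_ge m n (r v : 'cV[C]_m) (D : 'M[C]_(m, n))
    (u : 'cV[C]_n) (eps : R) :
  frob r = 1 -> frob D <= eps ->
  normc (dotc r v) - eps * frob u <= normc (dotc r (v + D *m u)).
Proof.
move=> r1 D_le.
have err_le : normc (dotc r (D *m u)) <= eps * frob u.
  apply: le_trans (normc_dotc_le _ _) _; rewrite r1 mul1r.
  exact: le_trans (frob_mulmx_le _ _) (ler_wpM2r (frob_ge0 _) D_le).
have -> : dotc r v = dotc r (v + D *m u) + - dotc r (D *m u) by rewrite dotcD addrK.
have := le_normcD (dotc r (v + D *m u)) (- dotc r (D *m u)); rewrite normcN; lra.
Qed.

Lemma exists_worst_perturbation m n (r v : 'cV[C]_m) (u : 'cV[C]_n) (eps : R) :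
  0 <= eps -> frob r = 1 ->
  exists2 D : 'M[C]_(m, n), frob D <= eps &
    normc (dotc r (v + D *m u)) <= Num.max 0 (normc (dotc r v) - eps * frob u).
Proof.
move=> eps_ge0 r1; set s := dotc r v.
have [su0|] := eqVneq (normc s * frob u) 0.
  exists 0; first by rewrite frob0.
  rewrite mul0mx addr0 le_max; move/eqP: su0; rewrite mulf_eq0.
  by case/orP => /eqP ->; rewrite ?lexx // mulr0 subr0 lexx orbT.
rewrite mulf_eq0 negb_or => /andP[s_neq0 u_neq0].
have s_gt0 : 0 < normc s by rewrite lt_def s_neq0 normc_ge0.
have u_gt0 : 0 < frob u by rewrite lt_def u_neq0 frob_ge0.
set t := Num.min (normc s) (eps * frob u).
have t_ge0 : 0 <= t by rewrite le_min normc_ge0 mulr_ge0 ?frob_ge0.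
have t_le : t <= normc s by rewrite ge_min lexx.
have [k k_ge0 k_eq] : exists2 k, 0 <= k & k * (normc s * frob u ^+ 2) = t.
  exists (t / (normc s * frob u ^+ 2)); last by rewrite divfK // mulf_neq0 ?expf_neq0.
  by rewrite divr_ge0 // mulr_ge0 ?sqr_ge0 ?normc_ge0.
(* The error points against [r^H v] along [r u^H]. *)
exists (- (k%:C * s) *: (r *m hermT u)).
  rewrite frobZ frob_outer r1 mul1r normcN ComplexField.Normc.normcM.
  rewrite normcR ger0_norm //.
  have -> : k * normc s * frob u = t / frob u by rewrite -k_eq; field.
  by rewrite ler_pdivrMr // ge_min lexx orbT.
rewrite -scalemxAl mulmx_outer scalerA dotcD dotcZ dotcc r1 expr1n -/s.
have -> : s + - (k%:C * s) * (frob u ^+ 2)%:C * 1%:C = s * (1 - k * frob u ^+ 2)%:C.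
  by rewrite rmorphB !rmorphM !rmorph1 /=; ring.
have -> : 1 - k * frob u ^+ 2 = (normc s - t) / normc s by rewrite -k_eq; field.
rewrite ComplexField.Normc.normcM normcR ger0_norm ?divr_ge0 ?subr_ge0 ?normc_ge0 //.
rewrite mulrC divfK // /t.
by case: (leP (normc s) (eps * frob u)) => _; rewrite ?subrr le_max lexx ?orbT.
Qed.

End Perturbation.

Section ComplexContinuity.
Variables (R : realType) (T : topologicalType).
Local Notation C := R[i].

Definition ccontinuous (h : T -> C) :=
  continuous (fun t => complex.Re (h t)) /\ continuous (fun t => complex.Im (h t)).

Lemma continuousRD (a b : T -> R) :
  continuous a -> continuous b -> continuous (fun t => a t + b t).
Proof. by move=> ha hb t; exact: (@continuousD R R^o T a b t (ha t) (hb t)). Qed.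

Lemma continuousRM (a b : T -> R) :
  continuous a -> continuous b -> continuous (fun t => a t * b t).
Proof. by move=> ha hb t; exact: (@continuousM R T a b t (ha t) (hb t)). Qed.

Lemma continuousRN (a : T -> R) : continuous a -> continuous (fun t => - a t).
Proof. by move=> ha t; exact: (@continuousN R R^o T a t (ha t)). Qed.

Lemma continuous_sumr (I : Type) (s : seq I) (F : I -> T -> R) :
  (forall i, continuous (F i)) -> continuous (fun t => \sum_(i <- s) F i t).
Proof. by move=> F_cont; apply: continuous_big => //; exact: add_continuous. Qed.

Lemma ccontinuous_cst (z : C) : ccontinuous (fun=> z).
Proof. by split; exact: cst_continuous. Qed.

Lemma ccontinuousD (h k : T -> C) :
  ccontinuous h -> ccontinuous k -> ccontinuous (fun t => h t + k t).
Proof.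
have ReD x y : complex.Re (x + y) = complex.Re x + complex.Re y by case: x y => ? ? [].
have ImD x y : complex.Im (x + y) = complex.Im x + complex.Im y by case: x y => ? ? [].
move=> [hRe hIm] [kRe kIm]; split.
  by under eq_fun do rewrite ReD; exact: continuousRD.
by under eq_fun do rewrite ImD; exact: continuousRD.
Qed.

Lemma ccontinuousM (h k : T -> C) :
  ccontinuous h -> ccontinuous k -> ccontinuous (fun t => h t * k t).
Proof.
have ReM x y : complex.Re (x * y) =
    complex.Re x * complex.Re y - complex.Im x * complex.Im y by case: x y => ? ? [].
have ImM x y : complex.Im (x * y) =
    complex.Re x * complex.Im y + complex.Im x * complex.Re y by case: x y => ? ? [].
move=> [hRe hIm] [kRe kIm]; split.
  under eq_fun do rewrite ReM.
  apply: continuousRD; first exact: continuousRM.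
  by apply: continuousRN; exact: continuousRM.
by under eq_fun do rewrite ImM; apply: continuousRD; exact: continuousRM.
Qed.

Lemma ccontinuous_sum (I : Type) (s : seq I) (F : I -> T -> C) :
  (forall i, ccontinuous (F i)) -> ccontinuous (fun t => \sum_(i <- s) F i t).
Proof.
move=> F_cont; elim: s => [|i s IHs].
  by under eq_fun do rewrite big_nil; exact: ccontinuous_cst.
by under eq_fun do rewrite big_cons; exact: ccontinuousD.
Qed.

Lemma continuous_cabs2 (h : T -> C) :
  ccontinuous h -> continuous (fun t => cabs2 (h t)).
Proof.
move=> [hRe hIm]; under eq_fun do rewrite cabs2E !expr2.
by apply: continuousRD; exact: continuousRM.
Qed.

Lemma continuous_frob m n (F : T -> 'M[C]_(m, n)) :
  (forall i j, ccontinuous (fun t => F t i j)) -> continuous (fun t => frob (F t)).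
Proof.
move=> F_cont t; apply: continuous_comp; last exact: sqrt_continuous.
apply: continuous_sumr => i; apply: continuous_sumr => j.
exact: continuous_cabs2.
Qed.

Lemma ccontinuous_mulmx m n p (A : 'M[C]_(m, n)) (F : T -> 'M[C]_(n, p)) :
  (forall i j, ccontinuous (fun t => F t i j)) ->
  forall i j, ccontinuous (fun t => (A *m F t) i j).
Proof.
move=> F_cont i j; under eq_fun do rewrite mxE.
by apply: ccontinuous_sum => k; apply: ccontinuousM => //; exact: ccontinuous_cst.
Qed.

End ComplexContinuity.

Section Relay.
Variables (R : realType) (N Md : nat) (Ps Pr sr2 sd2 eps : R).
Variables (Ht : 'M[R[i]]_(Md, N)) (g : 'cV[R[i]]_N).
Hypotheses (Md_gt0 : (0 < Md)%N) (Ps_gt0 : 0 < Ps) (Pr_gt0 : 0 < Pr)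
  (sr2_gt0 : 0 < sr2) (sd2_gt0 : 0 < sd2) (eps_ge0 : 0 <= eps) (g_neq0 : g != 0).
Local Notation C := R[i].
Local Notation sinr := (sinr Ps sr2 sd2 Ht g).
Local Notation robust_sinr := (robust_sinr Ps sr2 sd2 eps Ht g).
Local Notation feasible := (feasible Ps Pr sr2 g).

Let G := frob g ^+ 2.

Let frob_g_gt0 : 0 < frob g.
Proof. by rewrite lt_def frob_eq0 g_neq0 frob_ge0. Qed.

Let G_gt0 : 0 < G.
Proof. exact: exprn_gt0. Qed.

Let G_neq0 : G != 0.
Proof. exact: lt0r_neq0. Qed.

(* The SINR with [|a|^2] replaced by its lower bound [X / |g|^2], where
   [X = |a g|^2]. *)
Definition sinr_ub (X : R) := Ps * X / (sr2 * (X / G) + sd2).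

Lemma ler_sinr_ub X Y : 0 <= X -> X <= Y -> sinr_ub X <= sinr_ub Y.
Proof.
move=> X_ge0 le_XY; have Y_ge0 := le_trans X_ge0 le_XY.
have den_gt0 Z : 0 <= Z -> 0 < sr2 * (Z / G) + sd2.
  by move=> Z_ge0; rewrite ltr_wpDl // mulr_ge0 ?divr_ge0 // ltW.
rewrite /sinr_ub ler_pdivrMr ?den_gt0 // mulrAC ler_pdivlMr ?den_gt0 //.
have -> : Ps * X * (sr2 * (Y / G) + sd2) = Ps * X * Y * sr2 / G + Ps * X * sd2 by field.
have -> : Ps * Y * (sr2 * (X / G) + sd2) = Ps * X * Y * sr2 / G + Ps * Y * sd2 by field.
by rewrite lerD2l ler_wpM2r ?ler_wpM2l // ltW.
Qed.

Lemma sinr_ge0 W r dH : 0 <= sinr W r dH.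
Proof.
rewrite /sinr /=; apply: divr_ge0; first by rewrite mulr_ge0 ?cabs2_ge0 ?ltW.
by apply: addr_ge0; [rewrite mulr_ge0 ?sqr_ge0 // ltW | exact: ltW].
Qed.

Lemma sinr_le_ub W r dH :
  sinr W r dH <= sinr_ub (cabs2 ((hermT r *m (Ht + dH) *m W *m g) 0 0)).
Proof.
rewrite /sinr /sinr_ub /=; set a := hermT r *m (Ht + dH) *m W.
apply: ler_wpM2l; first by rewrite mulr_ge0 ?cabs2_ge0 ?ltW.
rewrite lef_pV2 ?posrE; last 2 first.
- by rewrite ltr_wpDl // mulr_ge0 ?sqr_ge0 // ltW.
- by rewrite ltr_wpDl // mulr_ge0 ?divr_ge0 ?cabs2_ge0 // ltW.
rewrite lerD2r ler_pM2l // ler_pdivrMr // sqr_frob_row.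
exact: cabs2_mulmx_le.
Qed.

Lemma sinr_rank1E u r dH :
  sinr (u *m hermT g) r dH = sinr_ub ((G * normc (dotc r ((Ht + dH) *m u))) ^+ 2).
Proof.
set b := dotc r _; rewrite /sinr /sinr_ub /=.
have -> : hermT r *m (Ht + dH) *m (u *m hermT g) = b *: hermT g.
  by rewrite !mulmxA [_ *m u]mx11_scalar mul_scalar_mx /b /dotc mulmxA.
rewrite frobZ frob_hermT -scalemxAl hermT_mul_self -/G !mxE eqxx mulr1n.
rewrite cabs2M cabs2R [cabs2 b]/cabs2.
have -> : (G * normc b) ^+ 2 / G = (normc b * frob g) ^+ 2.
  by rewrite !exprMn -/G; field.
by rewrite [(G * _) ^+ 2]exprMn [G ^+ 2 * _]mulrC.
Qed.

Definition robust_gain (u : 'cV[C]_N) := frob (Ht *m u) - eps * frob u.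

Definition sinr_of_gain t := sinr_ub ((G * Num.max 0 t) ^+ 2).

Lemma ler_sinr_of_gain s t : s <= t -> sinr_of_gain s <= sinr_of_gain t.
Proof.
move=> le_st; rewrite /sinr_of_gain; apply: ler_sinr_ub; first exact: sqr_ge0.
have m_ge0 : 0 <= G * Num.max 0 s by rewrite mulr_ge0 ?le_max ?lexx // ltW.
have le_m : G * Num.max 0 s <= G * Num.max 0 t.
  by rewrite ler_pM2l // ge_max !le_max lexx le_st orbT.
by rewrite !expr2 ler_pM.
Qed.

Lemma robust_sinr_rank1_ge u r :
  frob r = 1 -> normc (dotc r (Ht *m u)) = frob (Ht *m u) ->
  sinr_of_gain (robust_gain u) <= robust_sinr (u *m hermT g) r.
Proof.
move=> r1 r_aligned; apply: lb_le_inf.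
  by exists (sinr (u *m hermT g) r 0), 0 => //=; rewrite frob0.
move=> _ [dH dH_le <-]; rewrite sinr_rank1E /sinr_of_gain; apply: ler_sinr_ub.
  by rewrite sqr_ge0.
have gain_ge : Num.max 0 (robust_gain u) <= normc (dotc r ((Ht + dH) *m u)).
  rewrite ge_max normc_ge0 /robust_gain -r_aligned mulmxDl.
  exact: normc_dotc_perturb_ge.
have m_ge0 : 0 <= G * Num.max 0 (robust_gain u).
  by rewrite mulr_ge0 ?le_max ?lexx // ltW.
by rewrite !expr2 ler_pM // ler_pM2l.
Qed.

Lemma robust_sinr_le W r :
  frob r = 1 -> robust_sinr W r <= sinr_of_gain (robust_gain (G^-1%:C *: (W *m g))).
Proof.
move=> r1; set u := G^-1%:C *: (W *m g).
have [D D_le D_worst] := exists_worst_perturbation (Ht *m u) u eps_ge0 r1.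
have sinr_lb : has_lbound [set sinr W r dH | dH in [set dH | frob dH <= eps]].
  by exists 0 => _ [dH _ <-]; exact: sinr_ge0.
apply: le_trans (ge_inf sinr_lb (ex_intro2 _ _ D D_le erefl)) _.
apply: le_trans (sinr_le_ub _ _ _) _.
have -> : hermT r *m (Ht + D) *m W *m g = G%:C *: (hermT r *m ((Ht + D) *m u)).
  by rewrite /u -!scalemxAr scalerA -rmorphM mulfV // scale1r !mulmxA.
rewrite mxE cabs2M cabs2R -exprMn /sinr_of_gain.
apply: ler_sinr_ub; first exact: sqr_ge0.
have gain_le : normc (dotc r ((Ht + D) *m u)) <= Num.max 0 (robust_gain u).
  rewrite mulmxDl; apply: le_trans D_worst _; rewrite ge_max le_max lexx /=.
  by rewrite le_max lerD2r -[frob (Ht *m u)]mul1r -r1 normc_dotc_le orbT.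
have n_ge0 : 0 <= G * normc (dotc r ((Ht + D) *m u)).
  by rewrite mulr_ge0 ?normc_ge0 // ltW.
by rewrite !expr2 ler_pM // ler_pM2l.
Qed.

Lemma feasibleE W (r : 'cV[C]_Md) : feasible W r <->
  (forall i, Ps * cabs2 ((W *m g) i 0) + sr2 * \sum_j cabs2 (W i j) <= Pr)
  /\ frob r = 1.
Proof.
have power_diag i : (Ps%:C *: (W *m g *m hermT g *m hermT W)
    + sr2%:C *: (W *m hermT W)) i i
  = (Ps * cabs2 ((W *m g) i 0) + sr2 * \sum_j cabs2 (W i j))%:C.
  rewrite -mulmxA -hermTM !mxE big_ord1 !mxE rmorphD /=.
  rewrite [(Ps * _)%:C]rmorphM [(sr2 * _)%:C]rmorphM /= cabs2_mulJ.
  congr (_ + _ * _); rewrite rmorph_sum /=; apply: eq_bigr => j _.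
  by rewrite mxE cabs2_mulJ.
by split=> -[Pi r1]; split=> // i; move: (Pi i); rewrite power_diag lecR.
Qed.

Definition rad := Num.sqrt (Pr / (Ps * G + sr2)) / frob g.

Let den_gt0 : 0 < Ps * G + sr2.
Proof. by rewrite ltr_wpDl // mulr_ge0 // ltW. Qed.

Let den_neq0 : Ps * G + sr2 != 0.
Proof. exact: lt0r_neq0. Qed.

Lemma rad_gt0 : 0 < rad.
Proof. by rewrite divr_gt0 // sqrtr_gt0 divr_gt0. Qed.

Lemma sqr_rad : rad ^+ 2 = Pr / (Ps * G + sr2) / G.
Proof. by rewrite exprMn exprVn sqr_sqrtr // divr_ge0 // ltW. Qed.

Definition inbox (u : 'cV[C]_N) := forall i, cabs2 (u i 0) <= rad ^+ 2.

Lemma feasible_rank1 u (r : 'cV[C]_Md) :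
  inbox u -> frob r = 1 -> feasible (u *m hermT g) r.
Proof.
move=> u_box r1; apply/feasibleE; split => // i.
rewrite -mulmxA hermT_mul_self mul_mx_scalar -/G mxE cabs2M cabs2R.
have -> : \sum_j cabs2 ((u *m hermT g) i j) = cabs2 (u i 0) * G.
  rewrite /G sqr_frob_col mulr_sumr; apply: eq_bigr => j _.
  by rewrite !mxE big_ord1 mxE cabs2M cabs2J.
have := u_box i; rewrite sqr_rad -subr_ge0 => box_i; rewrite -subr_ge0.
have -> : Pr - (Ps * (G ^+ 2 * cabs2 (u i 0)) + sr2 * (cabs2 (u i 0) * G))
    = (Pr / (Ps * G + sr2) / G - cabs2 (u i 0)) * (G * (Ps * G + sr2)).
  by field; apply/andP.
by rewrite mulr_ge0 // mulr_ge0 // ltW.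
Qed.

Lemma inbox_feasible W (r : 'cV[C]_Md) : feasible W r -> inbox (G^-1%:C *: (W *m g)).
Proof.
move=> /feasibleE[Pi _] i; rewrite mxE cabs2M cabs2R sqr_rad; have := Pi i.
set X := cabs2 _; set Y := \sum_j _ => Pi_i.
have X_le : X <= Y * G by exact: cabs2_mulmx_le.
rewrite -subr_ge0.
have -> : Pr / (Ps * G + sr2) / G - G^-1 ^+ 2 * X
    = (Pr * G - X * (Ps * G + sr2)) / (G ^+ 2 * (Ps * G + sr2)).
  by field; apply/andP.
apply: divr_ge0; last by rewrite mulr_ge0 ?sqr_ge0 // ltW.
have : (Ps * X + sr2 * Y) * G <= Pr * G by rewrite ler_wpM2r // ltW.
have : sr2 * X <= sr2 * (Y * G) by rewrite ler_wpM2l // ltW.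
rewrite subr_ge0; lra.
Qed.

(* [R[i]] carries no topology in the library, so the box is parametrised by
   real vectors holding the real and imaginary parts. *)
Definition cvec (v : 'rV[R]_(N + N)) : 'cV[C]_N :=
  \col_j (v ord0 (lshift N j) +i* v ord0 (rshift N j)).

Lemma ccontinuous_cvec i j : ccontinuous (fun v => cvec v i j).
Proof. by under eq_fun do rewrite mxE; split; exact: coord_continuous. Qed.

Lemma continuous_robust_gain_cvec : continuous (fun v => robust_gain (cvec v)).
Proof.
apply: continuousRD; first exact/continuous_frob/ccontinuous_mulmx/ccontinuous_cvec.
apply/continuousRN/continuousRM; first exact: cst_continuous.
exact/continuous_frob/ccontinuous_cvec.
Qed.

Lemma compact_inbox : compact [set v | inbox (cvec v)].
Proof.
pose cube := [set v : 'rV[R]_(N + N) | forall i, `[- rad, rad]%classic (v ord0 i)].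
have cube_compact : compact cube :=
  @rV_compact R _ (fun=> `[- rad, rad]%classic) (fun=> @segment_compact R (- rad) rad).
have closed_inbox : closed [set v | inbox (cvec v)].
  have -> : [set v | inbox (cvec v)] = \bigcap_(j in setT)
      ((fun v => cabs2 (cvec v j 0)) @^-1` [set x | x <= rad ^+ 2]).
    by apply/seteqP; split => v v_box j //=; exact: v_box.
  apply: closed_bigI => j _.
  have cont_j : continuous (fun v => cabs2 (cvec v j 0)).
    exact/continuous_cabs2/ccontinuous_cvec.
  by apply: preimage_closed; [move=> v _; exact: cont_j | exact: closed_le].
have coord_le x y : x ^+ 2 + y ^+ 2 <= rad ^+ 2 -> `[- rad, rad]%classic x.
  move=> le_xy; have rad_ge0 := ltW rad_gt0.
  rewrite /= in_itv /= -ler_norml -(ler_pXn2r (_ : 0 < 2)%N) ?nnegrE ?normr_ge0 //.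
  by rewrite real_normK ?num_real //; apply: le_trans _ le_xy; rewrite lerDl sqr_ge0.
apply: subclosed_compact closed_inbox cube_compact _ => v v_box i.
have [j ->|j ->] := split_ordP i; have := v_box j; rewrite mxE cabs2E /=.
  exact: coord_le.
by rewrite addrC; exact: coord_le.
Qed.

Lemma exists_robust_gain_max :
  exists2 us, inbox us & forall u, inbox u -> robust_gain u <= robust_gain us.
Proof.
have inbox0 : [set v | inbox (cvec v)] 0.
  by move=> j; rewrite !mxE cabs2E /= expr0n addr0 sqr_ge0.
have [vs vs_box vs_max] := EVT_max_rV (ex_intro _ 0 inbox0) compact_inbox
  (continuous_subspaceT continuous_robust_gain_cvec).
exists (cvec vs); first by move: vs_box; rewrite inE.
move=> u u_box.
pose v := row_mx (\row_j complex.Re (u j 0)) (\row_j complex.Im (u j 0)).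
have cvecK : cvec v = u.
  apply/matrixP => j k; rewrite ord1 mxE row_mxEl row_mxEr !mxE.
  by case: (u j 0).
by rewrite -cvecK; apply: vs_max; rewrite inE /= cvecK.
Qed.

Lemma exists_rank1_optimal :
  exists u (r : 'cV[C]_Md), optimal Ps Pr sr2 sd2 eps Ht g (u *m hermT g) r.
Proof.
have [us us_box us_max] := exists_robust_gain_max.
have [rs [rs1 rs_aligned]] := exists_dotc_eq (Ht *m us) Md_gt0.
exists us, rs; split; first exact: feasible_rank1.
move=> W r /[dup] /inbox_feasible W_box /feasibleE[_ r1].
apply: le_trans (robust_sinr_le W r1) _.
apply: le_trans _ (robust_sinr_rank1_ge rs1 rs_aligned).
exact/ler_sinr_of_gain/us_max.
Qed.

End Relay.

Theorem lemma1 (R : realType) (N Md : nat) (Ps Pr sr2 sd2 eps : R)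
  (Ht : 'M[R[i]]_(Md, N)) (g : 'cV[R[i]]_N) :
  (0 < N)%N -> (0 < Md)%N ->
  0 < Ps -> 0 < Pr -> 0 < sr2 -> 0 < sd2 -> 0 <= eps ->
  g != 0 ->
  exists (W : 'M[R[i]]_N) (r : 'cV[R[i]]_Md) (w : 'cV[R[i]]_N),
    optimal Ps Pr sr2 sd2 eps Ht g W r /\
    W = ((Num.sqrt (Pr / (Ps * frob g ^+ 2 + sr2)) / frob g)%:C)
          *: (w *m hermT g).
Proof.
(* [0 < N] follows from [g != 0]. *)
move=> _ Md_gt0 Ps_gt0 Pr_gt0 sr2_gt0 sd2_gt0 eps_ge0 g_neq0.
have [u [r opt]] :=
  exists_rank1_optimal Ht Md_gt0 Ps_gt0 Pr_gt0 sr2_gt0 sd2_gt0 eps_ge0 g_neq0.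
have rad_neq0 := lt0r_neq0 (rad_gt0 Ps_gt0 Pr_gt0 sr2_gt0 g_neq0).
exists (u *m hermT g), r, ((rad Ps Pr sr2 g)^-1%:C *: u); split => //.
by rewrite -[_ / frob g]/(rad Ps Pr sr2 g) -scalemxAl scalerA -rmorphM mulfV // scale1r.
Qed.
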